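(* Let $\mathcal{C}$ be the full subcategory of $q\mathrm{Set}=\mathrm{PSh}(\mathrm{Coalg})$ consisting of the presheaves of the form $\mathcal{Y}(D)=\mathrm{Coalg}(-,D)$, $D$ a coalgebra. For coalgebras $D_1,D_2$ and $X_i:=\mathcal{Y}(D_i)$, define for every coalgebra $C$ $$(X_1\times_{\mathcal{C}}X_2)(C):=\{(x_1,x_2)\in X_1(C)\times X_2(C)\ :\ x_1(c_{(1)})\otimes x_2(c_{(2)})=x_1(c_{(2)})\otimes x_2(c_{(1)})\in D_1\otimes D_2\ \text{ for all } c\in C\}.$$ Then: (i) $X_1\times_{\mathcal{C}}X_2$ is a sub-presheaf of the argument-wise product $X_1\times X_2$; for every $(x_1,x_2)\in (X_1\times_{\mathcal{C}}X_2)(C)$ the linear map $(x_1,x_2):C\to D_1\otimes D_2$, $c\mapsto x_1(c_{(1)})\otimes x_2(c_{(2)})$, is a coalgebra map (for the tensor product coalgebra structure on $D_1\otimes D_2$), and $(x_1,x_2)\mapsto (x_1,x_2)$ defines an isomorphism of presheaves $X_1\times_{\mathcal{C}}X_2\cong \mathcal{Y}(D_1\otimes D_2)$; in particular $X_1\times_{\mathcal C}X_2\in\mathcal C$. (ii) (Partial associativity) For coalgebras $D_1,D_2,D_3$, $X_i=\mathcal{Y}(D_i)$, and $x_i\in X_i(C)$, the conditions $$(x_1,x_2)\in (X_1\times_{\mathcal{C}}X_2)(C)\ \text{ and }\ ((x_1,x_2),x_3)\in (\mathcal{Y}(D_1\otimes D_2)\times_{\mathcal{C}}X_3)(C)$$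 hold if and only if $$(x_2,x_3)\in (X_2\times_{\mathcal{C}}X_3)(C)\ \text{ and }\ (x_1,(x_2,x_3))\in (X_1\times_{\mathcal{C}}\mathcal{Y}(D_2\otimes D_3))(C),$$ and in that case $((x_1,x_2),x_3)=(x_1,(x_2,x_3))$ as coalgebra maps $C\to D_1\otimes D_2\otimes D_3$. (iii) (Unit) With $\{\bullet\}=\mathcal{Y}(\Bbbk\{\bullet\})$ the terminal presheaf, for every $X=\mathcal{Y}(D)$ one has $\{\bullet\}\times_{\mathcal{C}}X=\{\bullet\}\times X$ and $X\times_{\mathcal{C}}\{\bullet\}=X\times\{\bullet\}$. (iv) (Symmetry) $(x_1,x_2)\in(X_1\times_{\mathcal{C}}X_2)(C)$ iff $(x_2,x_1)\in(X_2\times_{\mathcal{C}}X_1)(C)$, and then $\tau\circ(x_1,x_2)=(x_2,x_1)$, where $\tau:D_1\otimes D_2\to D_2\otimes D_1$ is the flip.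
   Context: $\Bbbk$ is a field of characteristic zero. $\mathrm{Coalg}$ is the category of counital coassociative $\Bbbk$-coalgebras; Sweedler notation $\Delta(c)=c_{(1)}\otimes c_{(2)}$ is used. The tensor product $D_1\otimes D_2$ of coalgebras has $\Delta(d_1\otimes d_2)=d_{1(1)}\otimes d_{2(1)}\otimes d_{1(2)}\otimes d_{2(2)}$ and $\varepsilon(d_1\otimes d_2)=\varepsilon(d_1)\varepsilon(d_2)$; its unit is $\Bbbk\{\bullet\}$ (one group-like basis element). $q\mathrm{Set}$ is the category of presheaves of sets on $\mathrm{Coalg}$, $\mathcal{Y}$ the Yoneda embedding. The only element of $\mathcal{Y}(\Bbbk\{\bullet\})(C)$ is the counit $\varepsilon_C$ (identified with $c\mapsto\varepsilon(c)\bullet$). *)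

From HB Require Import structures.
From mathcomp Require Import all_boot all_order all_algebra.
From mathcomp Require Import finmap.
From mathcomp.multinomials Require Import monalg.

Set Implicit Arguments.
Unset Strict Implicit.
Unset Printing Implicit Defensive.

Import GRing.Theory.
Local Open Scope ring_scope.

(* Vector spaces are modelled as free vector spaces K[B] = {malg K[B]}
   on a basis type B (every K-vector space has a basis).  The tensor
   product K[A] (x) K[B] is identified with K[A * B], v (x) w being
   \sum v_a w_b (a,b).                                                  *)
Section Coalgebras.
Variable K : fieldType.

Local Notation V B := {malg K[B]}.

Definition bas {B : choiceType} (b : B) : V B := << (1 : K) *g b >>.

Definition lext {B : choiceType} {W : lmodType K} (f : B -> W) (v : V B) : W :=
  \sum_(b <- msupp v) v@_b *: f b.

Definition lextK {B : choiceType} (f : B -> K) (v : V B) : K :=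
  \sum_(b <- msupp v) v@_b * f b.

Definition tens {A B : choiceType} (v : V A) (w : V B) : V (A * B)%type :=
  \sum_(a <- msupp v) \sum_(b <- msupp w) << v@_a * w@_b *g (a, b) >>.

Definition tensmap {A1 A2 B1 B2 : choiceType}
    (f : V A1 -> V B1) (g : V A2 -> V B2) : V (A1 * A2)%type -> V (B1 * B2)%type :=
  lext (fun p : A1 * A2 => tens (f (bas p.1)) (g (bas p.2))).

Definition relabel {A B : choiceType} (h : A -> B) : V A -> V B :=
  lext (fun a => bas (h a)).

Definition flip {A B : Type} (p : A * B) : B * A := (p.2, p.1).
Definition assocr {A B C : Type} (p : (A * B) * C) : A * (B * C) :=
  (p.1.1, (p.1.2, p.2)).
Definition midswap {A A' B B' : Type} (p : (A * A') * (B * B')) :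
  (A * B) * (A' * B') := ((p.1.1, p.2.1), (p.1.2, p.2.2)).

Record coalg := Coalg {
  cbasis : choiceType;
  cdelta_b : cbasis -> V (cbasis * cbasis)%type;
  ceps_b : cbasis -> K }.

Definition cvec (C : coalg) := V (cbasis C).

Definition Delta (C : coalg) : cvec C -> V (cbasis C * cbasis C)%type :=
  lext (@cdelta_b C).
Definition eps (C : coalg) : cvec C -> K := lextK (@ceps_b C).

Definition is_coalgebra (C : coalg) : Prop :=
  [/\ forall c : cvec C,
        relabel assocr (tensmap (@Delta C) idfun (Delta c))
        = tensmap idfun (@Delta C) (Delta c),
      forall c : cvec C,
        lext (fun p : cbasis C * cbasis C => eps (bas p.1) *: bas p.2) (Delta c) = c
    & forall c : cvec C,
        lext (fun p : cbasis C * cbasis C => eps (bas p.2) *: bas p.1) (Delta c) = c].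

Definition coalg_map (C D : coalg) (f : cvec C -> cvec D) : Prop :=
  [/\ linear f,
      forall c, Delta (f c) = tensmap f f (Delta c)
    & forall c, eps (f c) = eps c].

Definition tensor_coalg (D1 D2 : coalg) : coalg :=
  @Coalg (cbasis D1 * cbasis D2)%type
    (fun p => relabel midswap (tens (cdelta_b p.1) (cdelta_b p.2)))
    (fun p => ceps_b p.1 * ceps_b p.2).

Definition unit_coalg : coalg :=
  @Coalg unit (fun _ => bas (tt, tt)) (fun _ => 1).

Definition fprod_cond (C D1 D2 : coalg)
    (x1 : cvec C -> cvec D1) (x2 : cvec C -> cvec D2) : Prop :=
  forall c : cvec C,
    tensmap x1 x2 (Delta c) = tensmap x1 x2 (relabel flip (Delta c)).

Definition in_fprod (C D1 D2 : coalg)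
    (x1 : cvec C -> cvec D1) (x2 : cvec C -> cvec D2) : Prop :=
  [/\ coalg_map x1, coalg_map x2 & fprod_cond x1 x2].

Definition pairing (C D1 D2 : coalg)
    (x1 : cvec C -> cvec D1) (x2 : cvec C -> cvec D2) :
    cvec C -> cvec (tensor_coalg D1 D2) :=
  fun c => tensmap x1 x2 (Delta c).

End Coalgebras.

(* Vectors of the free spaces K[B] are compared through all their evaluations
   [lext F v] against test functions F on the basis (vec_ext), so every tensor
   identity becomes an identity between iterated Sweedler sums.  In these terms
   fprod_cond x1 x2 says that x1 and x2 may be exchanged between two adjacent
   legs c(1), c(2) of a Sweedler sum.

   The pairing is a coalgebra map because comultiplying x1(c(1)) (x) x2(c(2))
   gives x1(c(1)) (x) x2(c(3)) (x) x1(c(2)) (x) x2(c(4)), and the condition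
   exchanges the two middle legs.  It is inverted by composing with the counit
   projections D1 (x) D2 -> Di, which themselves form a pair in the fibered
   product.

   For partial associativity, each side of (ii) says that the triple sum
   Sum G (x1 c(1)) (x2 c(2)) (x3 c(3)) is unchanged when x3 is moved to the
   first leg (resp. x1 to the last one); killing one leg with the counit
   recovers the two-map condition, and the other invariance is obtained by
   composing two adjacent exchanges. *)

From HB Require Import structures.
From mathcomp Require Import all_boot all_order all_algebra.
From mathcomp Require Import finmap.
From mathcomp.multinomials Require Import monalg.
From Stdlib Require Import FunctionalExtensionality.

Set Implicit Arguments.
Unset Strict Implicit.
Unset Printing Implicit Defensive.
Import GRing.Theory.
Local Open Scope ring_scope.

(** * Linear extension and tensors *)

Section LinearExtension.
Variable K : fieldType.
Local Notation V B := {malg K[B]}.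

Section LinearMaps.
Variables (U W : lmodType K) (f : U -> W) (f_lin : linear f).

Lemma linD u v : f (u + v) = f u + f v.
Proof. by case: (GRing.semilinear_linear f_lin) => _ ->. Qed.

Lemma linZ a u : f (a *: u) = a *: f u.
Proof. by case: (GRing.semilinear_linear f_lin) => ->. Qed.

Lemma lin0 : f 0 = 0.
Proof. by rewrite -(scale0r 0) linZ scale0r. Qed.

Lemma lin_sum (I : Type) (s : seq I) (P : pred I) (F : I -> U) :
  f (\sum_(i <- s | P i) F i) = \sum_(i <- s | P i) f (F i).
Proof. exact: (big_morph f linD lin0). Qed.

End LinearMaps.

Lemma lin_comp (U1 U2 U3 : lmodType K) (f : U2 -> U3) (g : U1 -> U2) :
  linear f -> linear g -> linear (f \o g).
Proof. by move=> f_lin g_lin a u v /=; rewrite g_lin f_lin. Qed.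

Lemma basZ (B : choiceType) (c : K) (b : B) : << c *g b >> = c *: bas K b.
Proof.
apply/malgP => k; rewrite mcoeffZ !mcoeffU.
by case: eqP => _; rewrite ?mulr1 ?mulr0.
Qed.

Section Lext.
Variables (B : choiceType) (W : lmodType K).
Implicit Types (f g : B -> W) (v : V B).

Lemma lext_supp f v (d : {fset B}) : (msupp v `<=` d)%fset ->
  lext f v = \sum_(b <- d) v@_b *: f b.
Proof.
move=> sd; apply: big_fset_incl => // b _ /mcoeff_outdom ->.
by rewrite scale0r.
Qed.

Lemma lext_linear f : linear (lext f).
Proof.
move=> a u v.
have suv : (msupp (a *: u + v) `<=` msupp u `|` msupp v)%fset.
  by apply: fsubset_trans (msuppD_le _ _) _; apply/fsetSU/msuppZ_le.
rewrite (lext_supp _ suv) (lext_supp _ (fsubsetUl _ (msupp v))).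
rewrite (lext_supp _ (fsubsetUr (msupp u) _)) scaler_sumr -big_split /=.
by apply: eq_bigr => b _; rewrite mcoeffD mcoeffZ scalerDl scalerA.
Qed.

Lemma lext_bas f b : lext f (bas K b) = f b.
Proof.
by rewrite /lext /bas msuppU oner_eq0 big_seq_fset1 mcoeffUU scale1r.
Qed.

Lemma lext_scale_bas f k b : lext f (k *: bas K b) = k *: f b.
Proof. by rewrite (linZ (lext_linear f)) lext_bas. Qed.

Lemma eq_lext f g v : f =1 g -> lext f v = lext g v.
Proof. by move=> fg; apply: eq_bigr => b _; rewrite fg. Qed.

Lemma lextZ (a : K) f v : lext (fun b => a *: f b) v = a *: lext f v.
Proof.
by rewrite /lext scaler_sumr; apply: eq_bigr => b _; rewrite !scalerA mulrC.
Qed.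

Lemma lext_scalel (k : B -> K) (w : W) v :
  lext (fun b => k b *: w) v = lextK k v *: w.
Proof. by rewrite /lext /lextK scaler_suml; apply: eq_bigr => b _; rewrite scalerA. Qed.

End Lext.

Lemma lextKE (B : choiceType) (f : B -> K) (v : V B) : lextK f v = @lext K B K^o f v.
Proof. by []. Qed.

Lemma lextK_mull (B : choiceType) (k : K) (f : B -> K) (v : V B) :
  lextK (fun b => k * f b) v = k * lextK f v.
Proof. exact: (@lextZ B K^o). Qed.

Lemma lin_lext (B : choiceType) (W W' : lmodType K) (phi : W -> W') (f : B -> W) v :
  linear phi -> phi (lext f v) = lext (phi \o f) v.
Proof.
by move=> phi_lin; rewrite /lext lin_sum //; apply: eq_bigr => b _; rewrite linZ.
Qed.

Lemma lext_basE (B : choiceType) (v : V B) : lext (bas K) v = v.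
Proof. by rewrite {2}(monalgE v); apply: eq_bigr => b _; rewrite basZ. Qed.

Lemma lext_bas_lin (B : choiceType) (W : lmodType K) (phi : V B -> W) v :
  linear phi -> lext (fun b => phi (bas K b)) v = phi v.
Proof. by move=> phi_lin; rewrite -{2}(lext_basE v) lin_lext. Qed.

Lemma lext_lext (A B : choiceType) (W : lmodType K) (F : B -> W) (G : A -> V B) v :
  lext F (lext G v) = lext (fun a => lext F (G a)) v.
Proof. exact/lin_lext/lext_linear. Qed.

Lemma lext_lin_bas (A B : choiceType) (W : lmodType K) (f : V A -> V B) (G : B -> W) v :
  linear f -> lext (fun a => lext G (f (bas K a))) v = lext G (f v).
Proof.
move=> f_lin; apply: (lext_bas_lin (phi := lext G \o f)).
exact/lin_comp/f_lin/lext_linear.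
Qed.

Lemma lext_swap (A B : choiceType) (W : lmodType K) (H : A -> B -> W) u v :
  lext (fun a => lext (H a) v) u = lext (fun b => lext (H^~ b) u) v.
Proof.
rewrite /lext; under eq_bigr => a _ do rewrite scaler_sumr.
rewrite exchange_big /=; apply: eq_bigr => b _; rewrite scaler_sumr.
by apply: eq_bigr => a _; rewrite !scalerA mulrC.
Qed.

Lemma vec_ext (B : choiceType) (u v : V B) :
  (forall F : B -> V B, lext F u = lext F v) -> u = v.
Proof. by move=> uv; rewrite -(lext_basE u) -(lext_basE v). Qed.

Lemma lext_tens (A B : choiceType) (W : lmodType K) (F : A * B -> W) u v :
  lext F (tens u v) = lext (fun a => lext (fun b => F (a, b)) v) u.
Proof.
have -> : tens u v = lext (fun a => lext (fun b => bas K (a, b)) v) u.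
  apply: eq_bigr => a _; rewrite /lext scaler_sumr.
  by apply: eq_bigr => b _; rewrite basZ scalerA.
rewrite lext_lext; apply: eq_lext => a.
by rewrite lext_lext; apply: eq_lext => b; rewrite lext_bas.
Qed.

Lemma lext_relabel (A B : choiceType) (W : lmodType K) (F : B -> W) (h : A -> B) v :
  lext F (relabel h v) = lext (fun a => F (h a)) v.
Proof. by rewrite lext_lext; apply: eq_lext => a; rewrite lext_bas. Qed.

Lemma lext_tensmap (A1 A2 B1 B2 : choiceType) (W : lmodType K)
    (f : V A1 -> V B1) (g : V A2 -> V B2) (F : B1 * B2 -> W) v :
  lext F (tensmap f g v) =
  lext (fun p => lext (fun a => lext (fun b => F (a, b)) (g (bas K p.2)))
                      (f (bas K p.1))) v.
Proof. by rewrite lext_lext; apply: eq_lext => p; rewrite lext_tens. Qed.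

Lemma tensmap_comp (A1 A2 B1 B2 C1 C2 : choiceType)
    (f : V B1 -> V C1) (g : V B2 -> V C2) (f' : V A1 -> V B1) (g' : V A2 -> V B2) w :
  linear f -> linear g ->
  tensmap f g (tensmap f' g' w) = tensmap (f \o f') (g \o g') w.
Proof.
move=> f_lin g_lin; apply: vec_ext => F; rewrite !lext_tensmap.
apply: eq_lext => p /=; rewrite -(lext_lin_bas _ _ f_lin).
apply: eq_lext => a; rewrite (lext_swap (fun b a' => lext (fun b' => F (a', b')) (g (bas K b)))).
by apply: eq_lext => a'; apply: lext_lin_bas.
Qed.

Lemma tensmap_flip (A1 A2 B1 B2 : choiceType)
    (f : V A1 -> V B1) (g : V A2 -> V B2) w :
  tensmap f g (relabel flip w) = relabel flip (tensmap g f w).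
Proof.
apply: vec_ext => F; rewrite lext_tensmap !lext_relabel lext_tensmap.
by apply: eq_lext => p; rewrite lext_swap.
Qed.

End LinearExtension.

(** * Sweedler calculus *)

Section CoalgebraCalculus.
Variables (K : fieldType) (C : coalg K).
Local Notation cb := (cbasis C).
Local Notation cd := (@cdelta_b K C).
Local Notation ce := (@ceps_b K C).

Lemma Delta_bas (b : cb) : Delta (bas K b) = cd b.
Proof. exact: lext_bas. Qed.

Lemma Delta_linear : linear (@Delta K C).
Proof. exact: lext_linear. Qed.

Lemma lext_Delta (W : lmodType K) (F : cb * cb -> W) v :
  lext F (Delta v) = lext (fun a => lext F (cd a)) v.
Proof. exact: lext_lext. Qed.

Lemma eps_bas (b : cb) : eps (bas K b) = ce b.
Proof. exact: (@lext_bas K cb K^o). Qed.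

Lemma lext_eps_scalel (W : lmodType K) (w : W) v :
  lext (fun b => ce b *: w) v = eps v *: w.
Proof. exact: lext_scalel. Qed.

Hypothesis C_coalg : is_coalgebra C.

Lemma counitL (W : lmodType K) (G : cb -> W) c :
  lext (fun p => ce p.1 *: G p.2) (Delta c) = lext G c.
Proof.
case: C_coalg => _ epsL _; rewrite -{2}(epsL c) lext_lext; apply: eq_lext => p.
by rewrite lext_scale_bas eps_bas.
Qed.

Lemma counitR (W : lmodType K) (G : cb -> W) c :
  lext (fun p => ce p.2 *: G p.1) (Delta c) = lext G c.
Proof.
case: C_coalg => _ _ epsR; rewrite -{2}(epsR c) lext_lext; apply: eq_lext => p.
by rewrite lext_scale_bas eps_bas.
Qed.

Lemma counitL_bas (W : lmodType K) (G : cb -> W) b :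
  lext (fun p => ce p.1 *: G p.2) (cd b) = G b.
Proof. by rewrite -Delta_bas counitL lext_bas. Qed.

Lemma counitR_bas (W : lmodType K) (G : cb -> W) b :
  lext (fun p => ce p.2 *: G p.1) (cd b) = G b.
Proof. by rewrite -Delta_bas counitR lext_bas. Qed.

Lemma coassoc (W : lmodType K) (F : cb -> cb -> cb -> W) c :
  lext (fun p => lext (fun q => F q.1 q.2 p.2) (cd p.1)) (Delta c) =
  lext (fun p => lext (fun q => F p.1 q.1 q.2) (cd p.2)) (Delta c).
Proof.
case: C_coalg => Dassoc _ _.
have := congr1 (lext (fun t => F t.1 t.2.1 t.2.2)) (Dassoc c).
rewrite lext_relabel !lext_tensmap /=.
under eq_lext => p do under eq_lext => q do rewrite lext_bas.
under [in X in _ = X -> _]eq_lext => p do rewrite lext_bas.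
under eq_lext => p do rewrite Delta_bas.
by under [in X in _ = X -> _]eq_lext => p do rewrite Delta_bas.
Qed.

Lemma coassoc_bas (W : lmodType K) (F : cb -> cb -> cb -> W) b :
  lext (fun p => lext (fun q => F q.1 q.2 p.2) (cd p.1)) (cd b) =
  lext (fun p => lext (fun q => F p.1 q.1 q.2) (cd p.2)) (cd b).
Proof. by rewrite -Delta_bas coassoc. Qed.

(* Sum Psi c(1) c(2) c(3) *)
Definition sweedler3 (W : lmodType K) (Psi : cb -> cb -> cb -> W) (c : cvec C) : W :=
  lext (fun p => lext (fun q => Psi p.1 q.1 q.2) (cd p.2)) (Delta c).

Lemma eq_sweedler3 (W : lmodType K) (Psi Psi' : cb -> cb -> cb -> W) c :
  (forall a b d, Psi a b d = Psi' a b d) -> sweedler3 Psi c = sweedler3 Psi' c.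
Proof. by move=> ePsi; apply: eq_lext => p; apply: eq_lext => q. Qed.

Lemma sweedler3_counit1 (W : lmodType K) (Phi : cb -> cb -> W) c :
  sweedler3 (fun a b d => ce a *: Phi b d) c = lext (fun p => Phi p.1 p.2) (Delta c).
Proof.
rewrite /sweedler3; under eq_lext => p do rewrite lextZ.
by rewrite (counitL (fun b => lext (fun q => Phi q.1 q.2) (cd b))) lext_Delta.
Qed.

Lemma sweedler3_counit2 (W : lmodType K) (Phi : cb -> cb -> W) c :
  sweedler3 (fun a b d => ce b *: Phi a d) c = lext (fun p => Phi p.1 p.2) (Delta c).
Proof. by apply: eq_lext => p; rewrite (counitL_bas (Phi p.1)). Qed.

Lemma sweedler3_counit3 (W : lmodType K) (Phi : cb -> cb -> W) c :
  sweedler3 (fun a b d => ce d *: Phi a b) c = lext (fun p => Phi p.1 p.2) (Delta c).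
Proof. by apply: eq_lext => p; rewrite (counitR_bas (Phi p.1)). Qed.

(* Both sides are Sum Psi c(1) c(2) c(3) c(4): the left one with the legs
   bracketed as c(1)(1) c(1)(2) c(2)(1) c(2)(2). *)
Lemma coassoc4 (W : lmodType K) (Psi : cb -> cb -> cb -> cb -> W) c :
  lext (fun p => lext (fun q => lext (fun r => Psi q.1 q.2 r.1 r.2) (cd p.2))
                      (cd p.1)) (Delta c) =
  lext (fun p => lext (fun q => lext (fun r => Psi p.1 r.1 r.2 q.2) (cd q.1))
                      (cd p.2)) (Delta c).
Proof.
rewrite (coassoc (fun a b d => lext (fun r => Psi a b r.1 r.2) (cd d))).
by apply: eq_lext => p; rewrite -(coassoc_bas (Psi p.1)).
Qed.

End CoalgebraCalculus.

Lemma lext_Delta_tensor (K : fieldType) (D1 D2 : coalg K) (W : lmodType K)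
    (F : (cbasis D1 * cbasis D2) * (cbasis D1 * cbasis D2) -> W) w :
  lext F (Delta (C := tensor_coalg D1 D2) w) =
  lext (fun s => lext (fun r1 => lext (fun r2 => F ((r1.1, r2.1), (r1.2, r2.2)))
                 (cdelta_b s.2)) (cdelta_b s.1)) w.
Proof.
by rewrite /Delta lext_lext; apply: eq_lext => s; rewrite /= lext_relabel lext_tens.
Qed.

Section CoalgebraMaps.
Variable K : fieldType.

Section OneMap.
Variables (C D : coalg K) (x : cvec C -> cvec D) (x_coalg : coalg_map x).

Lemma cm_linear : linear x. Proof. by case: x_coalg. Qed.
Lemma cm_Delta v : Delta (x v) = tensmap x x (Delta v). Proof. by case: x_coalg. Qed.
Lemma cm_eps v : eps (x v) = eps v. Proof. by case: x_coalg. Qed.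

Lemma lext_Delta_cm (W : lmodType K) (H : cbasis D * cbasis D -> W) v :
  lext (fun a => lext H (cdelta_b a)) (x v) =
  lext (fun q => lext (fun s => lext (fun t => H (s, t)) (x (bas K q.2))) (x (bas K q.1)))
       (Delta v).
Proof. by rewrite -lext_Delta cm_Delta lext_tensmap. Qed.

Lemma lext_eps_scalel_cm (W : lmodType K) (w : W) v :
  lext (fun d => ceps_b d *: w) (x v) = eps v *: w.
Proof. by rewrite lext_eps_scalel cm_eps. Qed.

End OneMap.

Lemma coalg_map_comp (C1 C2 C3 : coalg K) (f : cvec C2 -> cvec C3) (g : cvec C1 -> cvec C2) :
  coalg_map f -> coalg_map g -> coalg_map (f \o g).
Proof.
move=> f_coalg g_coalg; split.
- exact: lin_comp (cm_linear f_coalg) (cm_linear g_coalg).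
- move=> v /=; rewrite (cm_Delta f_coalg) (cm_Delta g_coalg) tensmap_comp //;
  exact: cm_linear.
- by move=> v /=; rewrite (cm_eps f_coalg) (cm_eps g_coalg).
Qed.

End CoalgebraMaps.

(** * The fibered product condition *)

Lemma relabel_flipK (K : fieldType) (A B : choiceType) (w : {malg K[(A * B)%type]}) :
  relabel flip (relabel flip w) = w.
Proof. by apply: vec_ext => F; rewrite !lext_relabel; apply: eq_lext => -[]. Qed.

Section PairingEvaluation.
Variables (K : fieldType) (C D1 D2 : coalg K).
Variables (x1 : cvec C -> cvec D1) (x2 : cvec C -> cvec D2).

Lemma lext_pairing (W : lmodType K) (F : cbasis D1 * cbasis D2 -> W) c :
  lext F (pairing x1 x2 c) =
  lext (fun p => lext (fun a => lext (fun b => F (a, b)) (x2 (bas K p.2)))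
                      (x1 (bas K p.1))) (Delta c).
Proof. exact: lext_tensmap. Qed.

Lemma lext_pairing_bas (W : lmodType K) (F : cbasis D1 * cbasis D2 -> W) b :
  lext F (pairing x1 x2 (bas K b)) =
  lext (fun q => lext (fun s => lext (fun t => F (s, t)) (x2 (bas K q.2)))
                      (x1 (bas K q.1))) (cdelta_b b).
Proof. by rewrite lext_pairing Delta_bas. Qed.

End PairingEvaluation.

Section FiberedCondition.
Variables (K : fieldType) (C D1 D2 : coalg K).
Variables (x1 : cvec C -> cvec D1) (x2 : cvec C -> cvec D2).

Lemma fprod_condE :
  fprod_cond x1 x2 <-> forall c, pairing x1 x2 c = relabel flip (pairing x2 x1 c).
Proof. by rewrite /fprod_cond /pairing; split=> xx c; rewrite xx tensmap_flip. Qed.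

Lemma pairing_flip : fprod_cond x1 x2 -> relabel flip \o pairing x1 x2 = pairing x2 x1.
Proof.
by move=> /fprod_condE xx; apply: functional_extensionality => c; rewrite /= xx relabel_flipK.
Qed.

Lemma fprod_cond_bas : fprod_cond x1 x2 ->
  forall (W : lmodType K) (G : cbasis D1 -> cbasis D2 -> W) b,
  lext (fun q => lext (fun s => lext (G s) (x2 (bas K q.2))) (x1 (bas K q.1))) (cdelta_b b) =
  lext (fun q => lext (fun s => lext (G s) (x2 (bas K q.1))) (x1 (bas K q.2))) (cdelta_b b).
Proof.
move=> /fprod_condE xx W G b.
have := congr1 (lext (fun st => G st.1 st.2)) (xx (bas K b)).
rewrite lext_relabel !lext_pairing_bas => ->.
by apply: eq_lext => q; rewrite lext_swap.
Qed.

End FiberedCondition.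

Lemma fprod_cond_sym (K : fieldType) (C D1 D2 : coalg K)
    (x1 : cvec C -> cvec D1) (x2 : cvec C -> cvec D2) :
  fprod_cond x1 x2 -> fprod_cond x2 x1.
Proof. by move=> /pairing_flip xx; apply/fprod_condE => c; rewrite -xx. Qed.

Section Presheaf.
Variables (K : fieldType) (C C' D1 D2 : coalg K).
Variables (g : cvec C' -> cvec C) (g_coalg : coalg_map g).
Variables (x1 : cvec C -> cvec D1) (x2 : cvec C -> cvec D2).

Lemma fprod_comp : in_fprod x1 x2 -> in_fprod (x1 \o g) (x2 \o g).
Proof.
case=> x1_coalg x2_coalg xx; split; try exact: coalg_map_comp.
have lin1 := cm_linear x1_coalg; have lin2 := cm_linear x2_coalg.
move=> c; rewrite -!(tensmap_comp g g _ lin1 lin2) tensmap_flip -(cm_Delta g_coalg).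
exact: xx.
Qed.

Lemma pairing_comp : coalg_map x1 -> coalg_map x2 ->
  pairing (x1 \o g) (x2 \o g) = pairing x1 x2 \o g.
Proof.
move=> /cm_linear lin1 /cm_linear lin2; apply: functional_extensionality => c.
by rewrite /pairing /= (cm_Delta g_coalg) tensmap_comp.
Qed.

End Presheaf.

Section PairingCoalgebraMap.
Variables (K : fieldType) (C D1 D2 : coalg K) (C_coalg : is_coalgebra C).
Variables (x1 : cvec C -> cvec D1) (x2 : cvec C -> cvec D2).
Hypotheses (x1_coalg : coalg_map x1) (x2_coalg : coalg_map x2).
Local Notation cd := (@cdelta_b K C).
Local Notation P := (pairing x1 x2).

Lemma pairing_eps c : eps (P c) = eps c.
Proof.
rewrite /eps lextKE lext_pairing /=.
under eq_lext => p do under eq_lext => a do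
  rewrite -lextKE lextK_mull -/(eps _) (cm_eps x2_coalg) eps_bas mulrC.
under eq_lext => p do rewrite -lextKE lextK_mull -/(eps _) (cm_eps x1_coalg) eps_bas.
exact: (counitR C_coalg (W := K^o) (@ceps_b K C) c).
Qed.

Definition eval4 (W : lmodType K) (F : (cbasis D1 * cbasis D2) * (cbasis D1 * cbasis D2) -> W)
    (a b d e : cbasis C) : W :=
  lext (fun s => lext (fun t => lext (fun s' => lext (fun t' => F ((s, t), (s', t')))
    (x2 (bas K e))) (x1 (bas K d))) (x2 (bas K b))) (x1 (bas K a)).

Lemma lext_tensmap_pairing (W : lmodType K) F c :
  lext F (tensmap P P (Delta c)) =
  lext (fun p => lext (fun q => lext (fun r => eval4 F q.1 q.2 r.1 r.2 : W)
    (cd p.2)) (cd p.1)) (Delta c).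
Proof.
rewrite lext_tensmap; apply: eq_lext => p /=; rewrite (lext_pairing_bas x1 x2).
apply: eq_lext => q; rewrite /eval4 [RHS]lext_swap; apply: eq_lext => s.
by rewrite [RHS]lext_swap; apply: eq_lext => t; rewrite (lext_pairing_bas x1 x2).
Qed.

Lemma lext_Delta_pairing (W : lmodType K) F c :
  lext F (Delta (C := tensor_coalg D1 D2) (P c)) =
  lext (fun p => lext (fun q => lext (fun r => eval4 F q.1 r.1 q.2 r.2 : W)
    (cd p.2)) (cd p.1)) (Delta c).
Proof.
rewrite lext_Delta_tensor lext_pairing; apply: eq_lext => p /=.
under eq_lext => a do rewrite lext_swap.
rewrite (lext_Delta_cm x1_coalg) Delta_bas.
under eq_lext => q do under eq_lext => s do under eq_lext => s' do
  rewrite (lext_Delta_cm x2_coalg) Delta_bas.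
apply: eq_lext => q; rewrite /eval4 [RHS]lext_swap; apply: eq_lext => s.
rewrite lext_swap; apply: eq_lext => r; exact: lext_swap.
Qed.

Lemma pairing_Delta : fprod_cond x1 x2 -> forall c, Delta (P c) = tensmap P P (Delta c).
Proof.
move=> xx c; apply: vec_ext => F; rewrite lext_Delta_pairing lext_tensmap_pairing.
apply: etrans (coassoc4 C_coalg (fun a b d e => eval4 F a d b e) c) _.
apply: esym; apply: etrans (coassoc4 C_coalg (eval4 F) c) _; apply: esym.
apply: eq_lext => p; apply: eq_lext => q /=.
rewrite /eval4 [LHS]lext_swap [RHS]lext_swap; apply: eq_lext => s.
exact/esym/(fprod_cond_bas (fprod_cond_sym xx)
  (fun t s' => lext (fun t' => F ((s, t), (s', t'))) (x2 (bas K q.2)))).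
Qed.

Lemma pairing_coalg : fprod_cond x1 x2 -> coalg_map P.
Proof.
move=> xx; split; [exact: lin_comp (lext_linear _) (@Delta_linear K C) | |].
  exact: pairing_Delta.
exact: pairing_eps.
Qed.

End PairingCoalgebraMap.

(** * The counit projections of D1 (x) D2 *)

Section TensorProjections.
Variables (K : fieldType) (D1 D2 : coalg K).
Local Notation T := (tensor_coalg D1 D2).

Definition tens_proj1 : cvec T -> cvec D1 :=
  lext (fun p : cbasis D1 * cbasis D2 => ceps_b p.2 *: bas K p.1).
Definition tens_proj2 : cvec T -> cvec D2 :=
  lext (fun p : cbasis D1 * cbasis D2 => ceps_b p.1 *: bas K p.2).

Lemma lext_tens_proj1 (W : lmodType K) (G : cbasis D1 -> W) w :
  lext G (tens_proj1 w) = lext (fun p => ceps_b p.2 *: G p.1) w.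
Proof. by rewrite lext_lext; apply: eq_lext => p; rewrite lext_scale_bas. Qed.

Lemma lext_tens_proj2 (W : lmodType K) (G : cbasis D2 -> W) w :
  lext G (tens_proj2 w) = lext (fun p => ceps_b p.1 *: G p.2) w.
Proof. by rewrite lext_lext; apply: eq_lext => p; rewrite lext_scale_bas. Qed.

Section ProjectPairing.
Variables (C : coalg K) (C_coalg : is_coalgebra C).
Variables (x1 : cvec C -> cvec D1) (x2 : cvec C -> cvec D2).

Lemma tens_proj1_pairing : linear x1 -> coalg_map x2 ->
  forall c, tens_proj1 (pairing x1 x2 c) = x1 c.
Proof.
move=> lin1 x2_coalg c; rewrite /tens_proj1 lext_pairing /=.
under eq_lext => p do under eq_lext => a do rewrite (lext_eps_scalel_cm x2_coalg) eps_bas.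
under eq_lext => p do rewrite lextZ lext_basE.
by rewrite (counitR C_coalg (fun b => x1 (bas K b))) lext_bas_lin.
Qed.

Lemma tens_proj2_pairing : coalg_map x1 -> linear x2 ->
  forall c, tens_proj2 (pairing x1 x2 c) = x2 c.
Proof.
move=> x1_coalg lin2 c; rewrite /tens_proj2 lext_pairing /=.
under eq_lext => p do under eq_lext => a do rewrite lextZ lext_basE.
under eq_lext => p do rewrite (lext_eps_scalel_cm x1_coalg) eps_bas.
by rewrite (counitL C_coalg (fun b => x2 (bas K b))) lext_bas_lin.
Qed.

End ProjectPairing.

Lemma pairing_inj (C : coalg K) (C_coalg : is_coalgebra C)
    (x1 y1 : cvec C -> cvec D1) (x2 y2 : cvec C -> cvec D2) :
  in_fprod x1 x2 -> in_fprod y1 y2 ->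
  pairing x1 x2 = pairing y1 y2 -> x1 = y1 /\ x2 = y2.
Proof.
case=> x1_coalg x2_coalg _ [y1_coalg y2_coalg _] xy.
split; apply: functional_extensionality => c.
  rewrite -(tens_proj1_pairing C_coalg (cm_linear x1_coalg) x2_coalg) xy.
  by rewrite (tens_proj1_pairing C_coalg (cm_linear y1_coalg) y2_coalg).
rewrite -(tens_proj2_pairing C_coalg x1_coalg (cm_linear x2_coalg)) xy.
by rewrite (tens_proj2_pairing C_coalg y1_coalg (cm_linear y2_coalg)).
Qed.

Lemma tens_proj1_bas a b : tens_proj1 (bas K (a, b)) = ceps_b b *: bas K a.
Proof. exact: lext_bas. Qed.

Lemma tens_proj2_bas a b : tens_proj2 (bas K (a, b)) = ceps_b a *: bas K b.
Proof. exact: lext_bas. Qed.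

Hypotheses (D1_coalg : is_coalgebra D1) (D2_coalg : is_coalgebra D2).

Lemma tens_proj1_coalg : coalg_map tens_proj1.
Proof.
split; first exact: lext_linear.
  move=> w; apply: vec_ext => F.
  rewrite lext_Delta lext_tens_proj1 lext_tensmap lext_Delta_tensor.
  apply: eq_lext => s /=.
  under [RHS]eq_lext => r1 do under eq_lext => r2 do rewrite !tens_proj1_bas !lext_scale_bas.
  under [RHS]eq_lext => r1 do
    rewrite (counitL_bas D2_coalg (fun d => ceps_b d *: F (r1.1, r1.2))).
  by rewrite [RHS]lextZ; congr (_ *: _); apply: eq_lext => -[].
move=> w; rewrite /eps !lextKE lext_tens_proj1.
by apply: eq_bigr => p _; rewrite /GRing.scale /= [_ * ceps_b p.1]mulrC.
Qed.

Lemma tens_proj2_coalg : coalg_map tens_proj2.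
Proof.
split; first exact: lext_linear.
  move=> w; apply: vec_ext => F.
  rewrite lext_Delta lext_tens_proj2 lext_tensmap lext_Delta_tensor.
  apply: eq_lext => s /=.
  under [RHS]eq_lext => r1 do under eq_lext => r2 do rewrite !tens_proj2_bas !lext_scale_bas.
  under [RHS]eq_lext => r1 do rewrite !lextZ.
  rewrite (counitL_bas D1_coalg
    (fun d => ceps_b d *: lext (fun r2 => F (r2.1, r2.2)) (cdelta_b s.2))).
  by congr (_ *: _); apply: eq_lext => -[].
move=> w; rewrite /eps !lextKE lext_tens_proj2.
by apply: eq_bigr => p _; rewrite /GRing.scale.
Qed.

Lemma tens_proj_Delta w : tensmap tens_proj1 tens_proj2 (Delta (C := T) w) = w.
Proof.
apply: vec_ext => F; rewrite lext_tensmap lext_Delta_tensor; apply: eq_lext => s /=.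
under eq_lext => r1 do under eq_lext => r2 do rewrite tens_proj1_bas tens_proj2_bas !lext_scale_bas.
under eq_lext => r1 do rewrite (counitL_bas D2_coalg (fun b => ceps_b r1.2 *: F (r1.1, b))).
by rewrite (counitR_bas D1_coalg (fun a => F (a, s.2))); case: s.
Qed.

Lemma tens_proj_flip_Delta w :
  tensmap tens_proj1 tens_proj2 (relabel flip (Delta (C := T) w)) = w.
Proof.
apply: vec_ext => F; rewrite lext_tensmap lext_relabel lext_Delta_tensor.
apply: eq_lext => s /=.
under eq_lext => r1 do under eq_lext => r2 do rewrite tens_proj1_bas tens_proj2_bas !lext_scale_bas.
under eq_lext => r1 do rewrite (counitR_bas D2_coalg (fun b => ceps_b r1.1 *: F (r1.2, b))).
by rewrite (counitL_bas D1_coalg (fun a => F (a, s.2))); case: s.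
Qed.

Lemma in_fprod_tens_proj : in_fprod tens_proj1 tens_proj2.
Proof.
split; [exact: tens_proj1_coalg | exact: tens_proj2_coalg |].
by move=> w; rewrite tens_proj_Delta tens_proj_flip_Delta.
Qed.

Lemma pairing_tens_proj : pairing tens_proj1 tens_proj2 = id.
Proof. exact/functional_extensionality/tens_proj_Delta. Qed.

Lemma pairing_surj (C : coalg K) (z : cvec C -> cvec T) : coalg_map z ->
  exists (x1 : cvec C -> cvec D1) (x2 : cvec C -> cvec D2),
    in_fprod x1 x2 /\ pairing x1 x2 = z.
Proof.
move=> z_coalg; exists (tens_proj1 \o z), (tens_proj2 \o z).
split; first exact: fprod_comp in_fprod_tens_proj.
by rewrite pairing_comp ?pairing_tens_proj //;
  [exact: tens_proj1_coalg | exact: tens_proj2_coalg].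
Qed.

End TensorProjections.

(** * Partial associativity *)

Section Associativity.
Variables (K : fieldType) (C D1 D2 D3 : coalg K) (C_coalg : is_coalgebra C).
Variables (x1 : cvec C -> cvec D1) (x2 : cvec C -> cvec D2) (x3 : cvec C -> cvec D3).
Hypotheses (x1_coalg : coalg_map x1) (x2_coalg : coalg_map x2) (x3_coalg : coalg_map x3).
Local Notation P12 := (pairing x1 x2).
Local Notation P23 := (pairing x2 x3).

Definition eval3 (W : lmodType K) (G : cbasis D1 -> cbasis D2 -> cbasis D3 -> W)
    (a b d : cbasis C) : W :=
  lext (fun s1 => lext (fun s2 => lext (G s1 s2) (x3 (bas K d))) (x2 (bas K b)))
       (x1 (bas K a)).

Lemma lext_pairing_l (W : lmodType K) F c :
  lext F (pairing P12 x3 c) = sweedler3 (eval3 (fun s1 s2 s3 => F ((s1, s2), s3) : W)) c.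
Proof.
rewrite /sweedler3 -(coassoc C_coalg) lext_pairing; apply: eq_lext => p.
by rewrite lext_pairing_bas.
Qed.

Lemma lext_pairing_l_flip (W : lmodType K) F c :
  lext F (tensmap P12 x3 (relabel flip (Delta c))) =
  sweedler3 (fun a b d => eval3 (fun s1 s2 s3 => F ((s1, s2), s3) : W) b d a) c.
Proof.
rewrite lext_tensmap lext_relabel; apply: eq_lext => p /=.
by rewrite lext_pairing_bas.
Qed.

Lemma lext_pairing_r (W : lmodType K) F c :
  lext F (pairing x1 P23 c) = sweedler3 (eval3 (fun s1 s2 s3 => F (s1, (s2, s3)) : W)) c.
Proof.
rewrite lext_pairing; apply: eq_lext => p /=.
by under eq_lext => s1 do rewrite lext_pairing_bas; rewrite lext_swap.
Qed.

Lemma lext_pairing_r_flip (W : lmodType K) F c :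
  lext F (tensmap x1 P23 (relabel flip (Delta c))) =
  sweedler3 (fun a b d => eval3 (fun s1 s2 s3 => F (s1, (s2, s3)) : W) d a b) c.
Proof.
rewrite /sweedler3.
rewrite -(coassoc C_coalg (fun a b d => eval3 (fun s1 s2 s3 => F (s1, (s2, s3))) d a b)).
rewrite lext_tensmap lext_relabel; apply: eq_lext => p /=.
by under eq_lext => s1 do rewrite lext_pairing_bas; rewrite lext_swap.
Qed.

Lemma fprod_cond_lP : fprod_cond P12 x3 <-> forall (W : lmodType K) G c,
  sweedler3 (eval3 G) c = sweedler3 (fun a b d => eval3 G b d a) c :> W.
Proof.
split=> [xx W G c | xx c].
  pose F t := G t.1.1 t.1.2 t.2 : W.
  exact: etrans (esym (lext_pairing_l F c))
                (etrans (congr1 (lext F) (xx c)) (lext_pairing_l_flip F c)).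
apply: vec_ext => F.
exact: etrans (lext_pairing_l F c) (etrans (xx _ _ c) (esym (lext_pairing_l_flip F c))).
Qed.

Lemma fprod_cond_rP : fprod_cond x1 P23 <-> forall (W : lmodType K) G c,
  sweedler3 (eval3 G) c = sweedler3 (fun a b d => eval3 G d a b) c :> W.
Proof.
split=> [xx W G c | xx c].
  pose F t := G t.1 t.2.1 t.2.2 : W.
  exact: etrans (esym (lext_pairing_r F c))
                (etrans (congr1 (lext F) (xx c)) (lext_pairing_r_flip F c)).
apply: vec_ext => F.
exact: etrans (lext_pairing_r F c) (etrans (xx _ _ c) (esym (lext_pairing_r_flip F c))).
Qed.

Lemma sweedler3_swap12 : fprod_cond x1 x2 -> forall (W : lmodType K) G c,
  sweedler3 (fun a b d => eval3 G d b a) c = sweedler3 (fun a b d => eval3 G b d a) c :> W.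
Proof.
move=> xx W G c; apply: eq_lext => p.
exact/esym/(fprod_cond_bas xx (fun s1 s2 => lext (G s1 s2) (x3 (bas K p.1)))).
Qed.

Lemma sweedler3_swap23 : fprod_cond x2 x3 -> forall (W : lmodType K) G c,
  sweedler3 (fun a b d => eval3 G d a b) c = sweedler3 (fun a b d => eval3 G d b a) c :> W.
Proof.
move=> xx W G c; rewrite /sweedler3 -(coassoc C_coalg (fun a b d => eval3 G d a b)).
rewrite -(coassoc C_coalg (fun a b d => eval3 G d b a)); apply: eq_lext => p /=.
rewrite /eval3 [LHS]lext_swap [RHS]lext_swap; apply: eq_lext => s1.
exact: (fprod_cond_bas xx (G s1)).
Qed.

Lemma eval3_eps1 (W : lmodType K) (H : cbasis D2 -> cbasis D3 -> W) a b d :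
  eval3 (fun s1 s2 s3 => ceps_b s1 *: H s2 s3) a b d =
  ceps_b a *: lext (fun s2 => lext (H s2) (x3 (bas K d))) (x2 (bas K b)).
Proof.
rewrite /eval3; under eq_lext => s1 do under eq_lext => s2 do rewrite lextZ.
by under eq_lext => s1 do rewrite lextZ; rewrite (lext_eps_scalel_cm x1_coalg) eps_bas.
Qed.

Lemma eval3_eps3 (W : lmodType K) (H : cbasis D1 -> cbasis D2 -> W) a b d :
  eval3 (fun s1 s2 s3 => ceps_b s3 *: H s1 s2) a b d =
  ceps_b d *: lext (fun s1 => lext (H s1) (x2 (bas K b))) (x1 (bas K a)).
Proof.
rewrite /eval3; under eq_lext => s1 do under eq_lext => s2 do
  rewrite (lext_eps_scalel_cm x3_coalg) eps_bas.
by under eq_lext => s1 do rewrite lextZ; rewrite lextZ.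
Qed.

Lemma sweedler3_eps1 (W : lmodType K) (F : cbasis D2 * cbasis D3 -> W) c :
  sweedler3 (eval3 (fun s1 s2 s3 => ceps_b s1 *: F (s2, s3))) c = lext F (pairing x2 x3 c).
Proof.
rewrite (eq_sweedler3 _ (eval3_eps1 (fun s2 s3 => F (s2, s3)))).
by rewrite (sweedler3_counit1 C_coalg) [RHS]lext_pairing.
Qed.

Lemma sweedler3_eps1_231 (W : lmodType K) (F : cbasis D2 * cbasis D3 -> W) c :
  sweedler3 (fun a b d => eval3 (fun s1 s2 s3 => ceps_b s1 *: F (s2, s3)) b d a) c =
  lext F (tensmap x2 x3 (relabel flip (Delta c))).
Proof.
rewrite (eq_sweedler3 _ (fun a b d => eval3_eps1 (fun s2 s3 => F (s2, s3)) b d a)).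
by rewrite (sweedler3_counit2 C_coalg) [RHS]lext_tensmap lext_relabel.
Qed.

Lemma fprod_cond23_of_sweedler3 :
  (forall (W : lmodType K) G c,
     sweedler3 (eval3 G) c = sweedler3 (fun a b d => eval3 G b d a) c :> W) ->
  fprod_cond x2 x3.
Proof.
move=> xx c; apply: vec_ext => F.
exact: etrans (esym (sweedler3_eps1 F c)) (etrans (xx _ _ c) (sweedler3_eps1_231 F c)).
Qed.

Lemma sweedler3_eps3 (W : lmodType K) (F : cbasis D1 * cbasis D2 -> W) c :
  sweedler3 (eval3 (fun s1 s2 s3 => ceps_b s3 *: F (s1, s2))) c = lext F (pairing x1 x2 c).
Proof.
rewrite (eq_sweedler3 _ (eval3_eps3 (fun s1 s2 => F (s1, s2)))).
by rewrite (sweedler3_counit3 C_coalg) [RHS]lext_pairing.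
Qed.

Lemma sweedler3_eps3_312 (W : lmodType K) (F : cbasis D1 * cbasis D2 -> W) c :
  sweedler3 (fun a b d => eval3 (fun s1 s2 s3 => ceps_b s3 *: F (s1, s2)) d a b) c =
  lext F (tensmap x1 x2 (relabel flip (Delta c))).
Proof.
rewrite (eq_sweedler3 _ (fun a b d => eval3_eps3 (fun s1 s2 => F (s1, s2)) d a b)).
by rewrite (sweedler3_counit2 C_coalg) [RHS]lext_tensmap lext_relabel.
Qed.

Lemma fprod_cond12_of_sweedler3 :
  (forall (W : lmodType K) G c,
     sweedler3 (eval3 G) c = sweedler3 (fun a b d => eval3 G d a b) c :> W) ->
  fprod_cond x1 x2.
Proof.
move=> xx c; apply: vec_ext => F.
exact: etrans (esym (sweedler3_eps3 F c)) (etrans (xx _ _ c) (sweedler3_eps3_312 F c)).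
Qed.

Lemma fprod_cond_assoc_fwd : fprod_cond x1 x2 -> fprod_cond P12 x3 ->
  fprod_cond x2 x3 /\ fprod_cond x1 P23.
Proof.
move=> x12 /fprod_cond_lP x12_3; have x23 := fprod_cond23_of_sweedler3 x12_3.
split; first exact: x23.
apply/fprod_cond_rP => W G c.
exact: etrans (x12_3 W G c)
  (esym (etrans (sweedler3_swap23 x23 G c) (sweedler3_swap12 x12 G c))).
Qed.

Lemma fprod_cond_assoc_bwd : fprod_cond x2 x3 -> fprod_cond x1 P23 ->
  fprod_cond x1 x2 /\ fprod_cond P12 x3.
Proof.
move=> x23 /fprod_cond_rP x1_23; have x12 := fprod_cond12_of_sweedler3 x1_23.
split; first exact: x12.
apply/fprod_cond_lP => W G c.
exact: etrans (x1_23 W G c) (etrans (sweedler3_swap23 x23 G c) (sweedler3_swap12 x12 G c)).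
Qed.

Lemma in_fprod_assoc :
  in_fprod x1 x2 /\ in_fprod P12 x3 <-> in_fprod x2 x3 /\ in_fprod x1 P23.
Proof.
split=> [[[_ _ x12] [_ _ x12_3]] | [[_ _ x23] [_ _ x1_23]]].
  have [x23 x1_23] := fprod_cond_assoc_fwd x12 x12_3.
  by split; [split | split=> //; exact (pairing_coalg C_coalg x2_coalg x3_coalg x23)].
have [x12 x12_3] := fprod_cond_assoc_bwd x23 x1_23.
by split; [split | split=> //; exact (pairing_coalg C_coalg x1_coalg x2_coalg x12)].
Qed.

Lemma pairing_assoc : relabel assocr \o pairing P12 x3 = pairing x1 P23.
Proof.
apply: functional_extensionality => c; apply: vec_ext => F.
exact: etrans (lext_relabel _ _ _)
  (etrans (lext_pairing_l (fun t => F (assocr t)) c) (esym (lext_pairing_r F c))).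
Qed.

End Associativity.

Lemma in_fprod_sym (K : fieldType) (C D1 D2 : coalg K)
    (x1 : cvec C -> cvec D1) (x2 : cvec C -> cvec D2) :
  in_fprod x1 x2 <-> in_fprod x2 x1.
Proof. by split=> -[? ? /fprod_cond_sym]. Qed.

Section UnitCoalgebra.
Variables (K : fieldType) (C D : coalg K) (C_coalg : is_coalgebra C).
Variables (e : cvec C -> cvec (unit_coalg K)) (x : cvec C -> cvec D).
Hypotheses (e_coalg : coalg_map e) (x_lin : linear x).

Lemma coalg_map_to_unit v : e v = eps v *: bas K tt.
Proof.
rewrite -(cm_eps e_coalg v) -{1}(lext_basE (e v)) /eps -lext_scalel.
by apply: eq_lext => -[]; rewrite scale1r.
Qed.

Lemma lext_pairing_unit_l (W : lmodType K) (F : cbasis (unit_coalg K) * cbasis D -> W) c :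
  lext F (pairing e x c) = lext (fun b => F (tt, b)) (x c).
Proof.
rewrite lext_pairing.
under eq_lext => p do rewrite coalg_map_to_unit eps_bas lext_scale_bas.
by rewrite (counitL C_coalg (fun d => lext (fun b => F (tt, b)) (x (bas K d)))) lext_lin_bas.
Qed.

Lemma lext_pairing_unit_r (W : lmodType K) (F : cbasis D * cbasis (unit_coalg K) -> W) c :
  lext F (pairing x e c) = lext (fun a => F (a, tt)) (x c).
Proof.
rewrite lext_pairing.
under eq_lext => p do under eq_lext => a do rewrite coalg_map_to_unit eps_bas lext_scale_bas.
under eq_lext => p do rewrite lextZ.
by rewrite (counitR C_coalg (fun d => lext (fun a => F (a, tt)) (x (bas K d)))) lext_lin_bas.
Qed.

Lemma fprod_cond_unit_l : fprod_cond e x.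
Proof.
apply/fprod_condE => c; apply: vec_ext => F.
exact: etrans (lext_pairing_unit_l F c)
  (esym (etrans (lext_relabel _ _ _) (lext_pairing_unit_r _ c))).
Qed.

End UnitCoalgebra.

Lemma in_fprod_unit_l (K : fieldType) (C D : coalg K) (C_coalg : is_coalgebra C)
    (e : cvec C -> cvec (unit_coalg K)) (x : cvec C -> cvec D) :
  in_fprod e x <-> coalg_map e /\ coalg_map x.
Proof.
split=> [[] // | [e_coalg x_coalg]]; split=> //.
exact (fprod_cond_unit_l C_coalg e_coalg (cm_linear x_coalg)).
Qed.

Lemma in_fprod_unit_r (K : fieldType) (C D : coalg K) (C_coalg : is_coalgebra C)
    (e : cvec C -> cvec (unit_coalg K)) (x : cvec C -> cvec D) :
  in_fprod x e <-> coalg_map x /\ coalg_map e.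
Proof. by rewrite in_fprod_sym in_fprod_unit_l // and_comm. Qed.

Unset Implicit Arguments.

Theorem mainTheorem1 (K : fieldType) (charK0 : [pchar K] =i pred0) :
  (* (i) *)
  (forall D1 D2 : coalg K, is_coalgebra D1 -> is_coalgebra D2 ->
     (* sub-presheaf of Y(D1) x Y(D2) *)
     (forall (C C' : coalg K), is_coalgebra C -> is_coalgebra C' ->
        forall g : cvec C' -> cvec C, coalg_map g ->
        forall (x1 : cvec C -> cvec D1) (x2 : cvec C -> cvec D2),
          in_fprod x1 x2 -> in_fprod (x1 \o g) (x2 \o g)) /\
     (* (x1,x2) is a coalgebra map C -> D1 (x) D2 *)
     (forall C : coalg K, is_coalgebra C ->
        forall (x1 : cvec C -> cvec D1) (x2 : cvec C -> cvec D2),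
          in_fprod x1 x2 -> coalg_map (pairing x1 x2)) /\
     (* naturality of (x1,x2) |-> (x1,x2) *)
     (forall (C C' : coalg K), is_coalgebra C -> is_coalgebra C' ->
        forall g : cvec C' -> cvec C, coalg_map g ->
        forall (x1 : cvec C -> cvec D1) (x2 : cvec C -> cvec D2),
          in_fprod x1 x2 -> pairing (x1 \o g) (x2 \o g) = pairing x1 x2 \o g) /\
     (* componentwise injectivity *)
     (forall C : coalg K, is_coalgebra C ->
        forall (x1 y1 : cvec C -> cvec D1) (x2 y2 : cvec C -> cvec D2),
          in_fprod x1 x2 -> in_fprod y1 y2 ->
          pairing x1 x2 = pairing y1 y2 -> x1 = y1 /\ x2 = y2) /\
     (* componentwise surjectivity onto Y(D1 (x) D2)(C) *)
     (forall C : coalg K, is_coalgebra C ->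
        forall z : cvec C -> cvec (tensor_coalg D1 D2), coalg_map z ->
        exists (x1 : cvec C -> cvec D1) (x2 : cvec C -> cvec D2),
          in_fprod x1 x2 /\ pairing x1 x2 = z)) /\
  (* (ii) partial associativity *)
  (forall D1 D2 D3 C : coalg K, is_coalgebra D1 -> is_coalgebra D2 ->
     is_coalgebra D3 -> is_coalgebra C ->
     forall (x1 : cvec C -> cvec D1) (x2 : cvec C -> cvec D2)
            (x3 : cvec C -> cvec D3),
       coalg_map x1 -> coalg_map x2 -> coalg_map x3 ->
       ((in_fprod x1 x2 /\ in_fprod (pairing x1 x2) x3) <->
        (in_fprod x2 x3 /\ in_fprod x1 (pairing x2 x3))) /\
       ((in_fprod x1 x2 /\ in_fprod (pairing x1 x2) x3) ->
        relabel assocr \o pairing (pairing x1 x2) x3 = pairing x1 (pairing x2 x3))) /\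
  (* (iii) unit *)
  (forall D C : coalg K, is_coalgebra D -> is_coalgebra C ->
     forall (e : cvec C -> cvec (unit_coalg K)) (x : cvec C -> cvec D),
       (in_fprod e x <-> coalg_map e /\ coalg_map x) /\
       (in_fprod x e <-> coalg_map x /\ coalg_map e)) /\
  (* (iv) symmetry *)
  (forall D1 D2 C : coalg K, is_coalgebra D1 -> is_coalgebra D2 ->
     is_coalgebra C ->
     forall (x1 : cvec C -> cvec D1) (x2 : cvec C -> cvec D2),
       (in_fprod x1 x2 <-> in_fprod x2 x1) /\
       (in_fprod x1 x2 -> relabel flip \o pairing x1 x2 = pairing x2 x1)).
Proof.
split.
  move=> D1 D2 D1_coalg D2_coalg.
  split; first by move=> C C' _ _ g g_coalg x1 x2; apply: fprod_comp.
  split; first by move=> C C_coalg x1 x2 [x1_coalg x2_coalg]; apply: pairing_coalg.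
  split; first by move=> C C' _ _ g g_coalg x1 x2 [x1_coalg x2_coalg _]; apply: pairing_comp.
  split; first by move=> C C_coalg x1 y1 x2 y2; apply: pairing_inj.
  by move=> C _ z z_coalg; apply: pairing_surj.
split.
  move=> D1 D2 D3 C _ _ _ C_coalg x1 x2 x3 x1_coalg x2_coalg x3_coalg.
  by split=> [|_]; [apply: in_fprod_assoc | apply: pairing_assoc].
split.
  by move=> D C _ C_coalg e x; split; [apply: in_fprod_unit_l | apply: in_fprod_unit_r].
move=> D1 D2 C _ _ _ x1 x2; split; first exact: in_fprod_sym.
by case=> _ _; apply: pairing_flip.
Qed.
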